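(* Let $G$ be a finite group and $X$ an $\mathtt{N}$-class of $G$. Then the partition of $X$ into its intersections with the $\circ$-classes of $G$ coincides with the partition of $X$ into $\diamond$-classes.
   Context: The power graph $\mathcal{P}(G)$ has vertex set $G$, and distinct $x,y$ are adjacent iff one is a positive integer power of the other. $x\mathtt{N}y$ iff $x$ and $y$ have the same closed neighbourhood in $\mathcal{P}(G)$. $x\diamond y$ iff $\langle x\rangle=\langle y\rangle$. $x\circ y$ iff $o(x)=o(y)$. Each $\mathtt{N}$-class is a union of $\diamond$-classes. *)

From mathcomp Require Import all_boot all_fingroup.
Set Implicit Arguments. Unset Strict Implicit. Unset Printing Implicit Defensive.
Local Open Scope group_scope.

(* Power graph of the finite group gT (the whole group = carrier type).
   Distinct x, y adjacent iff one is a positive integer power of the other. *)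
Definition pg_adj (gT : finGroupType) (x y : gT) : Prop :=
  x <> y /\
  ((exists n : nat, (0 < n)%N /\ y = x ^+ n) \/
   (exists n : nat, (0 < n)%N /\ x = y ^+ n)).

Definition in_closed_nbhd (gT : finGroupType) (x z : gT) : Prop :=
  z = x \/ pg_adj x z.

Definition Nrel (gT : finGroupType) (x y : gT) : Prop :=
  forall z : gT, in_closed_nbhd x z <-> in_closed_nbhd y z.

From mathcomp Require Import all_boot all_fingroup.

(* N-related elements are equal or adjacent in the power graph, so one lies in
   the cyclic subgroup generated by the other; a cyclic subgroup containing a
   generator of the same order is that generator's cyclic subgroup. *)

Set Implicit Arguments.
Unset Strict Implicit.
Unset Printing Implicit Defensive.

Local Open Scope group_scope.

Section PowerGraph.

Variable gT : finGroupType.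
Implicit Types x y : gT.

Lemma in_closed_nbhd_cycle x y :
  in_closed_nbhd x y -> y \in <[x]> \/ x \in <[y]>.
Proof.
case=> [-> | [_ [[n [_ ->]] | [n [_ ->]]]]].
- by left; exact: cycle_id.
- by left; exact: mem_cycle.
- by right; exact: mem_cycle.
Qed.

Lemma Nrel_cycle_mem x y : Nrel x y -> y \in <[x]> \/ x \in <[y]>.
Proof.
move=> Nxy; apply: in_closed_nbhd_cycle.
by apply/(Nxy y); left.
Qed.

Lemma eq_cycle_mem_order x y : y \in <[x]> -> #[y] = #[x] -> <[y]> = <[x]>.
Proof.
move=> y_x oyx; apply/eqP; rewrite eqEcard cycle_subG y_x /=.
by rewrite -!orderE oyx.
Qed.

End PowerGraph.

(* Within any N-class X: x o y (same order) iff x <> y (same cyclic subgroup). *)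
Theorem mainTheorem15 (gT : finGroupType) (x y : gT) :
  Nrel x y -> (#[x]%g = #[y]%g <-> <[x]>%g = <[y]>%g).
Proof.
move=> Nxy; split => [oxy | cxy]; last by rewrite /order cxy.
have [y_x | x_y] := Nrel_cycle_mem Nxy.
- by rewrite (eq_cycle_mem_order y_x (esym oxy)).
- exact: eq_cycle_mem_order x_y oxy.
Qed.
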